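(* Let $S\subset\mathbb{Z}_{>0}^3$ be the union, up to permutation of coordinates, of the following sets: (1) the set $\mathcal{A}$ of all well-formed triples $(a,b,c)$ for which $\mathbb{P}(a,b,c)$ contains a Du Val singularity or a smooth torus-invariant point; (2) $\mathcal{B}_1=\{(1+4\ell(n-1),\,2n-1+4k(n-1),\,4n-4): n\geq2,\ 0\leq\ell,k<n-1\}$; (3) $\mathcal{B}_2=\{(1+\ell(6n-5),\,3n-1+k(6n-5),\,6n-5): n\geq2,\ 0\leq\ell,k<\lceil\frac{4(6n-5)}{9}\rceil\}$; (4) $\mathcal{B}_3=\{(1+\ell(6n-7),\,3n-2+k(6n-7),\,6n-7): n\geq2,\ 0\leq\ell,k<\lceil\frac{4(6n-7)}{9}\rceil\}$. Then $S$ has density zero in $\mathbb{Z}_{>0}^3$, i.e. $\lim_{N\to\infty}\#(S\cap[1,N]^3)/N^3=0$.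
   Context: A triple $(a,b,c)$ is well-formed if its entries are pairwise coprime. The torus-invariant points of $\mathbb{P}(a,b,c)$ are the cyclic quotient points $\frac1a(b,c)$, $\frac1b(a,c)$, $\frac1c(a,b)$. *)

From mathcomp Require Import all_boot all_order all_algebra.
From mathcomp Require Import all_classical all_reals all_analysis.
Set Implicit Arguments. Unset Strict Implicit. Unset Printing Implicit Defensive.

Definition well_formed (a b c : nat) : bool :=
  [&& 0 < a, 0 < b, 0 < c, coprime a b, coprime a c & coprime b c].

(* The cyclic quotient point 1/r(u,v) (with u, v coprime to r) is smooth
   iff r = 1. *)
Definition cq_smooth (r u v : nat) : bool := r == 1.

(* The cyclic quotient surface singularity 1/r(u,v), r > 1, u,v coprime
   to r, is Du Val iff it is an A_{r-1} singularity iff r | u + v. *)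
Definition cq_DuVal (r u v : nat) : bool := (1 < r) && (r %| u + v).

(* Torus-invariant points of P(a,b,c): 1/a(b,c), 1/b(a,c), 1/c(a,b). *)
Definition tinv_pt_ok (r u v : nat) : bool := cq_smooth r u v || cq_DuVal r u v.

Definition inA (a b c : nat) : bool :=
  well_formed a b c &&
  [|| tinv_pt_ok a b c, tinv_pt_ok b a c | tinv_pt_ok c a b].

Definition ceil_div (p q : nat) : nat := (p + q - 1) %/ q.

(* B1 = {(1+4l(n-1), 2n-1+4k(n-1), 4n-4) : n >= 2, 0 <= l,k < n-1}.
   The bounds on the witnesses are harmless: n <= z, l <= x, k <= y. *)
Definition inB1 (x y z : nat) : bool :=
  [exists n : 'I_z.+1, exists l : 'I_x.+1, exists k : 'I_y.+1,
    [&& 2 <= n, l < n - 1, k < n - 1,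
        x == 1 + 4 * l * (n - 1),
        y == 2 * n - 1 + 4 * k * (n - 1) &
        z == 4 * n - 4]].

Definition inB2 (x y z : nat) : bool :=
  [exists n : 'I_z.+1, exists l : 'I_x.+1, exists k : 'I_y.+1,
    [&& 2 <= n, l < ceil_div (4 * (6 * n - 5)) 9, k < ceil_div (4 * (6 * n - 5)) 9,
        x == 1 + l * (6 * n - 5),
        y == 3 * n - 1 + k * (6 * n - 5) &
        z == 6 * n - 5]].

Definition inB3 (x y z : nat) : bool :=
  [exists n : 'I_z.+1, exists l : 'I_x.+1, exists k : 'I_y.+1,
    [&& 2 <= n, l < ceil_div (4 * (6 * n - 7)) 9, k < ceil_div (4 * (6 * n - 7)) 9,
        x == 1 + l * (6 * n - 7),
        y == 3 * n - 2 + k * (6 * n - 7) &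
        z == 6 * n - 7]].

Definition inBase (x y z : nat) : bool :=
  [|| inA x y z, inB1 x y z, inB2 x y z | inB3 x y z].

Definition inS (x y z : nat) : bool :=
  [|| inBase x y z, inBase x z y, inBase y x z,
      inBase y z x, inBase z x y | inBase z y x].

Definition countS (N : nat) : nat :=
  \sum_(1 <= x < N.+1) \sum_(1 <= y < N.+1) \sum_(1 <= z < N.+1) inS x y z.

From mathcomp Require Import all_boot all_order all_algebra.
From mathcomp Require Import all_classical all_reals all_analysis.
From mathcomp Require Import zify ring lra.
Import Order.TTheory GRing.Theory Num.Theory numFieldNormedType.Exports.

(* Every triple of S satisfies, after a permutation of its coordinates, a
   divisibility y | t + z whose shift t depends only on x and y: a smooth
   point 1/r(u,v) has r = 1 | u + v, a Du Val point has r | u + v, and a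
   triple of B_1, B_2 or B_3 has x = 1 + l z, so z | (z - 1) + x.  For fixed
   x and y at most N/y + 1 values z <= N qualify; counting y <= M trivially
   and y > M by this bound gives at most (M^2 N^2 + 2 N^3) / M triples in
   [1,N]^3, so the density is O(M/N + 1/M). *)

Lemma sum_dvdn_window b t K n : n <= b ->
  \sum_(K <= c < K + n) (b %| t + c) <= 1.
Proof.
elim: n => [|n IHn] le_nb; first by rewrite addn0 big_geq.
rewrite addnS big_nat_recr /=; last exact: leq_addr.
have [dvd_last|] := boolP (b %| t + (K + n)); last by rewrite addn0 IHn // ltnW.
rewrite big_nat_cond big1 // => c /andP[/andP[Kc cKn] _].
case: (boolP (b %| t + c)) => // dvd_c.
have: b %| (t + (K + n)) - (t + c) by exact: dvdn_sub.
have -> : t + (K + n) - (t + c) = K + n - c by lia.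
by move/dvdn_leq; lia.
Qed.

Lemma sum_dvdn_windows b t q : \sum_(0 <= c < q * b) (b %| t + c) <= q.
Proof.
elim: q => [|q IHq]; first by rewrite mul0n big_geq.
rewrite mulSnr (@big_cat_nat _ _ _ (q * b)) //=; last exact: leq_addr.
by rewrite -addn1 leq_add // sum_dvdn_window.
Qed.

Lemma count_dvdn_shift_le b t N : 0 < b ->
  b * \sum_(1 <= c < N.+1) (b %| t + c) <= N + b.
Proof.
move=> b_gt0; set q := (N %/ b).+1.
have le_sum : \sum_(1 <= c < N.+1) (b %| t + c) <= \sum_(0 <= c < q * b) (b %| t + c).
  rewrite (@big_cat_nat _ _ _ N.+1 0 (q * b)) //=; last exact: ltn_ceil.
  rewrite (@big_cat_nat _ _ _ 1 0 N.+1) //=.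
  lia.
have := leq_trans le_sum (sum_dvdn_windows b t q).
have := leq_trunc_div N b; rewrite /q; nia.
Qed.

Lemma sum_leq_cutoff N M : \sum_(1 <= y < N.+1) (y <= M) <= minn N M.
Proof.
elim: N => [|N IHN]; first by rewrite big_geq.
by rewrite big_nat_recr //=; case: leqP => /=; lia.
Qed.

Lemma count_dvdn_pairs_le N M (s : nat -> nat) :
  M * \sum_(1 <= y < N.+1) \sum_(1 <= z < N.+1) (y %| s y + z) <= M ^ 2 * N + 2 * N ^ 2.
Proof.
rewrite big_distrr /=.
apply: (@leq_trans (\sum_(1 <= y < N.+1) (M * N * (y <= M) + 2 * N))).
  rewrite big_nat_cond [leqRHS]big_nat_cond; apply: leq_sum => y /andP[/andP[y_gt0 yN] _].
  set g := \sum_(1 <= z < N.+1) _.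
  have g_le : g <= N.
    rewrite -[leqRHS](subn1 N.+1) -(muln1 (N.+1 - 1)) -sum_nat_const_nat.
    by apply: leq_sum => z _; exact: leq_b1.
  have := @count_dvdn_shift_le y (s y) N y_gt0.
  by case: leqP => /=; nia.
rewrite big_split /= -big_distrr sum_nat_const_nat subn1 /=.
have := leq_mul (leqnn (M * N)) (leq_trans (sum_leq_cutoff N M) (geq_minr N M)).
rewrite -!mulnn; lia.
Qed.

Definition count3 (N : nat) (F : nat -> nat -> nat -> nat) : nat :=
  \sum_(1 <= x < N.+1) \sum_(1 <= y < N.+1) \sum_(1 <= z < N.+1) F x y z.

Lemma count3_swap12 N F : count3 N F = count3 N (fun x y z => F y x z).
Proof. exact: exchange_big. Qed.

Lemma count3_swap23 N F : count3 N F = count3 N (fun x y z => F x z y).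
Proof. by apply: eq_bigr => x _; rewrite exchange_big. Qed.

Lemma count3_rotl N F : count3 N F = count3 N (fun x y z => F y z x).
Proof. by rewrite count3_swap23 count3_swap12. Qed.

Lemma count3_rotr N F : count3 N F = count3 N (fun x y z => F z x y).
Proof. by rewrite count3_swap12 count3_swap23. Qed.

Lemma leq_count3 N F G : (forall x y z, F x y z <= G x y z) -> count3 N F <= count3 N G.
Proof. by move=> leFG; do 3 (apply: leq_sum => ? _); exact: leFG. Qed.

Lemma count3D N F G :
  count3 N (fun x y z => F x y z + G x y z) = count3 N F + count3 N G.
Proof.
rewrite /count3 -big_split; apply: eq_bigr => x _; rewrite -big_split.
by apply: eq_bigr => y _; rewrite -big_split.
Qed.

Lemma count3_sym N F :
  count3 N (fun x y z => F x y z + F x z y + F y x z + F y z x + F z x y + F z y x)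
  = 6 * count3 N F.
Proof.
have e132 : count3 N (fun x y z => F x z y) = count3 N F by rewrite [RHS]count3_swap23.
have e213 : count3 N (fun x y z => F y x z) = count3 N F by rewrite [RHS]count3_swap12.
have e231 : count3 N (fun x y z => F y z x) = count3 N F by rewrite [RHS]count3_rotl.
have e312 : count3 N (fun x y z => F z x y) = count3 N F by rewrite [RHS]count3_rotr.
have e321 : count3 N (fun x y z => F z y x) = count3 N F.
  by rewrite [RHS]count3_rotl [RHS]count3_swap23.
by rewrite !count3D e132 e213 e231 e312 e321; lia.
Qed.

Lemma count3_dvdn_shift_le N M (t : nat -> nat -> nat) :
  M * count3 N (fun x y z => y %| t x y + z) <= M ^ 2 * N ^ 2 + 2 * N ^ 3.
Proof.
rewrite /count3 big_distrr /=.
apply: (@leq_trans (\sum_(1 <= x < N.+1) (M ^ 2 * N + 2 * N ^ 2))).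
  by apply: leq_sum => x _; exact: count_dvdn_pairs_le.
by rewrite sum_nat_const_nat subn1 /= !expnS expn0 !muln1; lia.
Qed.

Lemma tinv_pt_ok_dvdn r u v : tinv_pt_ok r u v -> r %| u + v.
Proof. by case/orP => [/eqP -> | /andP[_]]. Qed.

Lemma inA_dvdn x y z : inA x y z -> [|| x %| y + z, y %| x + z | z %| x + y].
Proof.
by case/andP=> _ /or3P[] /tinv_pt_ok_dvdn ->; rewrite ?orbT.
Qed.

Lemma inB_dvdn x y z :
  [|| inB1 x y z, inB2 x y z | inB3 x y z] -> z %| z.-1 + x.
Proof.
by case/or3P=> /existsP[n /existsP[l /existsP[k /andP[n2 /and5P[_ _ /eqP x_eq _ /eqP z_eq]]]]];
  apply/dvdnP; exists l.+1; rewrite -subn1; nia.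
Qed.

Lemma inBase_dvdn x y z : inBase x y z ->
  [|| x %| y + z, y %| x + z, z %| x + y | z %| z.-1 + x].
Proof.
case/orP => [/inA_dvdn | /inB_dvdn ->]; last by rewrite !orbT.
by case/or3P => ->; rewrite ?orbT.
Qed.

Lemma countS_le N M : M * countS N <= 24 * (M ^ 2 * N ^ 2 + 2 * N ^ 3).
Proof.
have inS_le x y z : inS x y z <= inBase x y z + inBase x z y + inBase y x z
    + inBase y z x + inBase z x y + inBase z y x.
  by rewrite /inS; do 6 case: (inBase _ _ _).
have inBase_le x y z : inBase x y z <=
    (x %| y + z) + (y %| x + z) + (z %| x + y) + (z %| z.-1 + x).
  by move: (@inBase_dvdn x y z); case: (inBase _ _ _) => // /(_ isT); do 4 case: (_ %| _).
have le_S : countS N <= 6 * count3 N inBase.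
  by rewrite -count3_sym; exact: leq_count3.
have le_Base := @leq_count3 N _ _ inBase_le; rewrite !count3D in le_Base.
pose B := M ^ 2 * N ^ 2 + 2 * N ^ 3.
have T1 : M * count3 N (fun x y z => x %| y + z) <= B.
  by rewrite count3_swap12; exact: (count3_dvdn_shift_le N M (fun x y => x)).
have T2 : M * count3 N (fun x y z => y %| x + z) <= B.
  exact: (count3_dvdn_shift_le N M (fun x y => x)).
have T3 : M * count3 N (fun x y z => z %| x + y) <= B.
  by rewrite count3_swap23; exact: (count3_dvdn_shift_le N M (fun x y => x)).
have T4 : M * count3 N (fun x y z => z %| z.-1 + x) <= B.
  by rewrite count3_rotr; exact: (count3_dvdn_shift_le N M (fun x y => y.-1)).
have := leq_mul (leqnn M) le_S; have := leq_mul (leqnn M) le_Base.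
rewrite !mulnDr; lia.
Qed.

Local Open Scope ring_scope.
Local Open Scope classical_set_scope.

Lemma countS_density_le (R : realType) (N M : nat) : (0 < N)%N -> (0 < M)%N ->
  (countS N)%:R / (N ^ 3)%:R <= 24 * M%:R / N%:R + 48 / M%:R :> R.
Proof.
move=> N_gt0 M_gt0.
have n_neq0 : N%:R != 0 :> R by rewrite pnatr_eq0 -lt0n.
have m_gt0 : 0 < M%:R :> R by rewrite ltr0n.
rewrite ler_pdivrMr ?ltr0n ?expn_gt0 ?N_gt0 // -(ler_pM2l m_gt0).
have -> : M%:R * ((24 * M%:R / N%:R + 48 / M%:R) * (N ^ 3)%:R)
    = (24 * (M ^ 2 * N ^ 2 + 2 * N ^ 3))%:R :> R.
  by rewrite !(natrM, natrD, natrX); field; rewrite n_neq0 gt_eqF.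
by rewrite -natrM ler_nat countS_le.
Qed.

Theorem lemma4p11 (R : realType) :
  ((countS N)%:R / (N ^ 3)%:R : R) @[N --> \oo] --> 0.
Proof.
apply/cvgrPdist_lt => e e_gt0.
pose M := (Num.truncn (96 / e)).+1.
have M_gt : 96 / e < M%:R by exact: truncnS_gt.
pose K := (Num.truncn (48 * M%:R / e)).+1.
have K_gt : 48 * M%:R / e < K%:R by exact: truncnS_gt.
exists K => // N /= le_KN.
have N_gt0 : (0 < N)%N by exact: leq_trans le_KN.
rewrite sub0r normrN ger0_norm ?divr_ge0 //.
apply: le_lt_trans (@countS_density_le R N M N_gt0 isT) _.
have n_ge : K%:R <= N%:R :> R by rewrite ler_nat.
have n_gt0 : 0 < N%:R :> R by rewrite ltr0n.
have m_gt0 : 0 < M%:R :> R by rewrite ltr0n.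
rewrite ltr_pdivrMr // in M_gt; rewrite ltr_pdivrMr // in K_gt.
have T1 : 24 * M%:R / N%:R < e / 2 :> R by rewrite ltr_pdivrMr //; nra.
have T2 : 48 / M%:R < e / 2 :> R by rewrite ltr_pdivrMr //; nra.
lra.
Qed.
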